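(* Let $\{A_n\}_{n\geq1}$ be an increasing sequence of finite sets of isolated points of $\mathbb{R}^2$ with $f(n)=\sharp A_n\to+\infty$, $S=\bigcup_n A_n$, and $\{Z(x):x\in S\}$ a random field whose variables all have distribution function $F$, $\overline F=1-F$. Let $\tau>0$ and $\{u_n(\tau)\}$ be reals with $E\big(\sum_{x\in A_n}\mathbf{1}_{\{Z(x)>u_n(\tau)\}}\big)\to\tau$. Suppose $\mathbf{Z}_A=\{Z(x):x\in A_n\}_{n\ge1}$ satisfies $D(u_n(\tau),k_n,l_n)$ and let, for each $n$, $\mathcal{B}_n=\{B_n^{(s,t)}:s,t=1,\dots,k_n\}$ be a family of $k_n^2$ pairwise disjoint subsets of $A_n$ with $\sharp B_n^{(s,t)}\sim f(n)/k_n^2$ and $P(\bigvee_{x\in A_n}Z(x)\le u_n(\tau))-\prod_{s,t}P(\bigvee_{x\in B_n^{(s,t)}}Z(x)\le u_n(\tau))\to0$. Write $N_n^{(s,t)}=\sum_{x\in B_n^{(s,t)}}\mathbf 1_{\{Z(x)>u_n(\tau)\}}$. If $\mathbf{Z}_A$ has spatial extremal index $\theta_A$, then $$\theta_A=\lim_{n\to+\infty}\frac{1}{k_n^2}\sum_{B_n^{(s,t)}\in\mathcal{B}_n}\Big(E\big(N_n^{(s,t)}\,\big|\,N_n^{(s,t)}>0\big)\Big)^{-1}.$$ Moreover, if $\lim_{n\to\infty}E(N_n^{(s,t)}\mid N_n^{(s,t)}>0)=1$ uniformly in $s,t\in\{1,\dots,k_n\}$, then $\theta_A=1$.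
   Context: $\pi_1,\pi_2$ are coordinate projections; $f_i(n)=\sharp\pi_i(A_n)$; $\bigvee$ is maximum. The pair $(I,J)$ is in $\mathcal{S}(\pi_i(A_n),l_n)$ if $I,J$ are sets of consecutive values of $\pi_i(A_n)$ separated by at least $l_n$ values of $\pi_i(A_n)$. Condition $D(u_n,k_n,l_n)$: there are positive integer sequences $l_n\to\infty$, $k_n\to\infty$ with $k_nl_nf_i(n)/f(n)\to0$ ($i=1,2$) and $k_n^2\alpha(l_n,u_n)\to0$, where $\alpha(l_n,u_n)=\sup|P(\bigvee_{x\in C\cup D}Z(x)\le u_n)-P(\bigvee_{x\in C}Z(x)\le u_n)P(\bigvee_{x\in D}Z(x)\le u_n)|$ over subsets $C,D\subseteq A_n$ whose $\pi_i$-projections form a pair in $\mathcal{S}(\pi_i(A_n),l_n)$ for each $i$. Spatial extremal index: $\mathbf{Z}_A$ has spatial extremal index $\theta_A$ if for each $\tau>0$ and any real sequence $\{u_n(\tau)\}$ with $E(\sum_{x\in A_n}\mathbf 1_{\{Z(x)>u_n(\tau)\}})\to\tau$ one has $P(\bigvee_{x\in A_n}Z(x)\le u_n(\tau))\to e^{-\theta_A\tau}$. *)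

From HB Require Import structures.
From mathcomp Require Import all_boot all_order all_algebra.
From mathcomp Require Import finmap.
From mathcomp Require Import all_classical all_reals all_analysis.
Set Implicit Arguments. Unset Strict Implicit. Unset Printing Implicit Defensive.
Import Order.TTheory GRing.Theory Num.Theory.
Import numFieldNormedType.Exports.
Local Open Scope classical_set_scope.
Local Open Scope ring_scope.
Local Open Scope fset_scope.

Section spatial_extremes.
Context {d : measure_display} {T : measurableType d} {R : realType}.
Implicit Types (P : probability T R) (Z : R * R -> T -> R).

Definition proj1s (A : {fset (R * R)}) : {fset R} := [fset x.1 | x in A].
Definition proj2s (A : {fset (R * R)}) : {fset R} := [fset x.2 | x in A].

Definition maxZ Z (C : {fset (R * R)}) (w : T) : \bar R :=
  \big[maxe/-oo%E]_(x <- C) (Z x w)%:E.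

Definition maxle Z (C : {fset (R * R)}) (u : R) : set T :=
  [set w | (maxZ Z C w <= u%:E)%E].

Definition Nexc Z (C : {fset (R * R)}) (u : R) : T -> R :=
  fun w => \sum_(x <- C) \1_[set w' | u < Z x w'] w.

Definition condE P (X : T -> R) (E : set T) : R :=
  fine ('E_P[X \* \1_E]) / fine (P E).

Definition consecutive (V I : {fset R}) : Prop :=
  I `<=` V /\
  forall x y z, x \in I -> z \in I -> y \in V -> x <= y <= z -> y \in I.

Definition sepS (V : {fset R}) (l : nat) (I J : {fset R}) : Prop :=
  [/\ consecutive V I, consecutive V J,
      (forall x z, x \in I -> z \in J -> x < z) \/
      (forall x z, x \in I -> z \in J -> z < x) &
      forall x z, x \in I -> z \in J ->
        (l <= #|` [fset y in V | (Num.min x z < y < Num.max x z)%R]|)%N].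

Definition alpha P Z (A : {fset (R * R)}) (l : nat) (u : R) : R :=
  sup [set r | exists C D : {fset (R * R)},
         [/\ C `<=` A, D `<=` A,
             sepS (proj1s A) l (proj1s C) (proj1s D),
             sepS (proj2s A) l (proj2s C) (proj2s D) &
             r = `| fine (P (maxle Z (C `|` D) u))
                    - fine (P (maxle Z C u)) * fine (P (maxle Z D u)) |]].

Definition nat_to_infty (v : nat -> nat) : Prop :=
  forall M : nat, \forall n \near \oo, (M <= v n)%N.

Definition condD P Z (A : nat -> {fset (R * R)}) (u : nat -> R)
    (k l : nat -> nat) : Prop :=
  [/\ (forall n, (0 < l n)%N) /\ (forall n, (0 < k n)%N),
      nat_to_infty l /\ nat_to_infty k,
      (fun n => ((k n * l n * #|` proj1s (A n)|)%:R / (#|` A n|)%:R : R))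
        @ \oo --> (0 : R),
      (fun n => ((k n * l n * #|` proj2s (A n)|)%:R / (#|` A n|)%:R : R))
        @ \oo --> (0 : R) &
      (fun n => ((k n) ^ 2)%:R * alpha P Z (A n) (l n) (u n)) @ \oo --> (0 : R)].

Definition spatial_extremal_index P Z (A : nat -> {fset (R * R)}) (theta : R)
  : Prop :=
  forall tau : R, 0 < tau -> forall u : nat -> R,
    (fun n => fine ('E_P[Nexc Z (A n) (u n)])) @ \oo --> tau ->
    (fun n => fine (P (maxle Z (A n) (u n)))) @ \oo --> expR (- (theta * tau)).

End spatial_extremes.

(* For the k_n^2 blocks write p = P(N > 0) and e = E N, so that the summand
   E(N | N > 0)^-1 is p / e.  The block approximation turns
   P(max_{A_n} Z <= u_n) -> exp(-theta tau) into prod (1 - p) -> exp(-theta tau).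
   Each p tends to 0 uniformly, and then exp(-(1 + 2 delta) p) <= 1 - p <= exp(-p)
   gives sum p -> theta tau.  Since the blocks have asymptotically equal sizes,
   k_n^2 e -> tau uniformly, so the average of p / e, which is
   sum p * (k_n^2 e)^-1, tends to theta tau / tau = theta.  If E(N | N > 0) -> 1
   uniformly, the same average tends to 1, whence theta = 1. *)

From HB Require Import structures.
From mathcomp Require Import all_boot all_order all_algebra.
From mathcomp Require Import finmap.
From mathcomp Require Import all_classical all_reals all_analysis.
From mathcomp Require Import ring lra.
Import Order.TTheory GRing.Theory Num.Theory.
Import numFieldNormedType.Exports.
Local Open Scope classical_set_scope.
Local Open Scope ring_scope.

Section product_bounds.
Context {R : realType}.

Lemma expR_le_1B (p δ : R) : 0 <= p -> p <= δ -> δ <= 1/2 ->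
  expR (- ((1 + 2 * δ) * p)) <= 1 - p.
Proof.
move=> p0 pδ δ2; rewrite expRN -[_^-1]mul1r ler_pdivrMr ?expR_gt0 //.
apply: le_trans (_ : 1 <= (1 - p) * (1 + (1 + 2 * δ) * p)) _; first nra.
by apply: ler_wpM2l; [lra | exact: expR_ge1Dx].
Qed.

Lemma prod1B_le_expR (J : finType) (p : J -> R) :
  (forall j, 0 <= p j <= 1) -> \prod_j (1 - p j) <= expR (- \sum_j p j).
Proof.
move=> p01; rewrite -sumrN expR_sum; apply: ler_prod => j _.
have /andP[_ p1] := p01 j; rewrite subr_ge0 p1.
exact: expR_ge1Dx.
Qed.

Lemma expR_le_prod1B (J : finType) (p : J -> R) (δ : R) :
  (forall j, 0 <= p j <= δ) -> δ <= 1/2 ->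
  expR (- ((1 + 2 * δ) * \sum_j p j)) <= \prod_j (1 - p j).
Proof.
move=> p0δ δ2; rewrite mulr_sumr -sumrN expR_sum; apply: ler_prod => j _.
have /andP[p0 pδ] := p0δ j; rewrite expR_ge0.
exact: expR_le_1B.
Qed.

Lemma sumr_const_card (J : finType) (x : R) : \sum_(j : J) x = #|J|%:R * x.
Proof. by rewrite sumr_const mulr_natl. Qed.

End product_bounds.

Section uniform_convergence.
Context {R : realType} {I : nat -> finType}.
Implicit Types (a p q : forall n, I n -> R).

Definition uniformly_to a (c : R) : Prop :=
  forall e : R, 0 < e -> \forall n \near \oo, forall i, `|a n i - c| <= e.

Lemma uniformly_toV a c : c != 0 -> uniformly_to a c ->
  uniformly_to (fun n i => (a n i)^-1) c^-1.
Proof.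
move=> c0 ha e e0; have nc0 : 0 < `|c| by rewrite normr_gt0.
have d0 : 0 < Num.min (`|c| / 2) (e * `|c| ^+ 2 / 2).
  by rewrite lt_min !divr_gt0 ?mulr_gt0 ?exprn_gt0.
near=> n => i.
have /(_ i) : forall i, `|a n i - c| <= Num.min (`|c| / 2) (e * `|c| ^+ 2 / 2).
  by near: n; exact: ha.
rewrite le_min => /andP[hc he].
have ha_ge : `|c| / 2 <= `|a n i|.
  by have := ler_distD (a n i) c 0; rewrite !subr0 distrC; lra.
have a0 : a n i != 0 by rewrite -normr_gt0; lra.
have -> : (a n i)^-1 - c^-1 = (c - a n i) / (a n i * c) by field; apply/andP.
rewrite normrM normfV normrM ler_pdivrMr ?mulr_gt0 ?normr_gt0 // distrC.
have : e * (`|c| / 2 * `|c|) <= e * (`|a n i| * `|c|).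
  by apply: ler_wpM2l; [exact: ltW | exact: ler_wpM2r].
lra.
Unshelve. all: end_near. Qed.

Lemma uniformly_toMr a (b : nat -> R) c t : uniformly_to a c -> b @ \oo --> t ->
  uniformly_to (fun n i => a n i * b n) (c * t).
Proof.
move=> ha hb e e0.
have t1 : 0 < `|t| + 1 by rewrite ltr_wpDl.
have c1 : 0 < `|c| + 1 by rewrite ltr_wpDl.
pose e1 := e / (2 * (`|t| + 1)); pose e2 := e / (2 * (`|c| + 1)).
have e20 : 0 < Num.min 1 e2 by rewrite lt_min ltr01 divr_gt0 ?mulr_gt0.
move/cvgrPdist_le/(_ _ e20) : hb => b_near.
have e1_eq : e1 * (2 * (`|t| + 1)) = e by rewrite mulfVK ?gt_eqF ?mulr_gt0.
have e2_eq : e2 * (2 * (`|c| + 1)) = e by rewrite mulfVK ?gt_eqF ?mulr_gt0.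
have e1_ge0 : 0 <= e1 by rewrite divr_ge0 ?mulr_ge0 ?ltW.
have e2_ge0 : 0 <= e2 by rewrite divr_ge0 ?mulr_ge0 ?ltW.
have e10 : 0 < e1 by rewrite divr_gt0 ?mulr_gt0.
near=> n => i.
have a_n : forall i, `|a n i - c| <= e1 by near: n; exact: ha.
have t_b : `|t - b n| <= Num.min 1 e2 by near: n.
have b_le : `|b n| <= `|t| + 1.
  have : `|t - b n| <= 1 by apply: le_trans t_b _; rewrite ge_min lexx.
  by have := ler_distD t (b n) 0; rewrite !subr0 (distrC t); lra.
have tb_e2 : `|t - b n| <= e2 by apply: le_trans t_b _; rewrite ge_min lexx orbT.
have -> : a n i * b n - c * t = (a n i - c) * b n + c * (b n - t) by ring.
apply: le_trans (ler_normD _ _) _; rewrite !normrM (distrC (b n)).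
have : `|a n i - c| * `|b n| <= e1 * (`|t| + 1) by apply: ler_pM.
have : `|c| * `|t - b n| <= `|c| * e2 by apply: ler_wpM2l.
nra.
Unshelve. all: end_near. Qed.
Lemma cvg_mean_uniformly a c : (\forall n \near \oo, 0 < #|I n|)%N ->
  uniformly_to a c -> (fun n => (#|I n|%:R)^-1 * \sum_i a n i) @ \oo --> c.
Proof.
move=> I_gt0 ha; apply/cvgrPdist_le => e e0; near=> n.
have nI : 0 < #|I n|%:R :> R by rewrite ltr0n; near: n.
have ha_n : forall i, `|a n i - c| <= e by near: n; exact: ha.
have -> : c - (#|I n|%:R)^-1 * \sum_i a n i = (#|I n|%:R)^-1 * \sum_i (c - a n i).
  by rewrite sumrB sumr_const_card mulrBr mulKf ?gt_eqF.
rewrite normrM gtr0_norm ?invr_gt0 // ler_pdivrMl //.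
apply: le_trans (ler_norm_sum _ _ _) _; rewrite -sumr_const_card.
by apply: ler_sum => i _; rewrite distrC.
Unshelve. all: end_near. Qed.

Lemma cvg_sum_of_prod1B p (C L : R) : 0 < C ->
  (forall n i, 0 <= p n i) -> uniformly_to p 0 ->
  (\forall n \near \oo, \sum_i p n i <= C) ->
  (fun n => \prod_i (1 - p n i)) @ \oo --> expR (- L) ->
  (fun n => \sum_i p n i) @ \oo --> L.
Proof.
move=> C0 p0 p_to0 sum_le prod_cvg; apply/cvgrPdist_le => e e0.
pose δ := Num.min (1/2) (e / (4 * C)).
have δ0 : 0 < δ by rewrite lt_min !divr_gt0 ?mulr_gt0.
have δ2 : δ <= 1/2 by rewrite ge_min lexx.
have δC : 2 * δ * C <= e / 2.
  have : δ * (4 * C) <= e by rewrite -ler_pdivlMr ?mulr_gt0 // ge_min lexx orbT.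
  lra.
pose m := Num.min (expR (- L) - expR (- L - e / 2)) (expR (- L + e / 2) - expR (- L)).
have m0 : 0 < m by rewrite lt_min !subr_gt0 !ltr_expR; apply/andP; split; lra.
have m1 : m <= expR (- L) - expR (- L - e / 2) by rewrite ge_min lexx.
have m2 : m <= expR (- L + e / 2) - expR (- L) by rewrite ge_min lexx orbT.
move/cvgrPdist_le/(_ m m0) : prod_cvg => prod_near.
near=> n.
have p_small : forall i, `|p n i - 0| <= δ by near: n; exact: p_to0.
have pδ i : 0 <= p n i <= δ.
  by have := p_small i; rewrite subr0 ger0_norm // p0.
have Sn : \sum_i p n i <= C by near: n.
have /ler_normlP[Π1 Π2] : `|expR (- L) - \prod_i (1 - p n i)| <= m.
  by near: n.
have Π_le : \prod_i (1 - p n i) <= expR (- \sum_i p n i).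
  by apply: prod1B_le_expR => i; have := pδ i; lra.
have Π_ge : expR (- ((1 + 2 * δ) * \sum_i p n i)) <= \prod_i (1 - p n i).
  exact: expR_le_prod1B.
have S_le : \sum_i p n i <= L + e / 2.
  have : expR (- L - e / 2) <= expR (- \sum_i p n i) by lra.
  rewrite ler_expR; lra.
have S_ge : L - e / 2 <= (1 + 2 * δ) * \sum_i p n i.
  have : expR (- ((1 + 2 * δ) * \sum_i p n i)) <= expR (- L + e / 2) by lra.
  rewrite ler_expR; lra.
have : 2 * δ * \sum_i p n i <= 2 * δ * C.
  by apply: ler_wpM2l; rewrite // mulr_ge0 // ltW.
move=> h; apply/ler_normlP; split; nra.
Unshelve. all: end_near. Qed.

Lemma cvg_sum_mulr_uniformly p q (L c : R) :
  (forall n i, 0 <= p n i) -> (fun n => \sum_i p n i) @ \oo --> L ->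
  uniformly_to q c -> (fun n => \sum_i p n i * q n i) @ \oo --> L * c.
Proof.
move=> p0 sum_cvg q_c; apply/cvgrPdist_le => e e0.
have L1 : 0 < `|L| + 1 by rewrite ltr_wpDl.
have c1 : 0 < `|c| + 1 by rewrite ltr_wpDl.
pose e1 := e / (2 * (`|L| + 1)); pose e2 := e / (2 * (`|c| + 1)).
have e10 : 0 < e1 by rewrite divr_gt0 ?mulr_gt0.
have e20 : 0 < Num.min 1 e2 by rewrite lt_min ltr01 divr_gt0 ?mulr_gt0.
move/cvgrPdist_le/(_ _ e20) : sum_cvg => sum_near.
near=> n.
have q_n : forall i, `|q n i - c| <= e1 by near: n; exact: q_c.
have L_S : `|L - \sum_i p n i| <= Num.min 1 e2 by near: n.
set S := \sum_i p n i in L_S *.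
have /ler_normlP[S1 S2] : `|L - S| <= 1 by apply: le_trans L_S _; rewrite ge_min lexx.
have Le2 : `|L - S| <= e2 by apply: le_trans L_S _; rewrite ge_min lexx orbT.
have -> : L * c - \sum_i p n i * q n i = (L - S) * c + \sum_i p n i * (c - q n i).
  have -> : \sum_i p n i * (c - q n i) = S * c - \sum_i p n i * q n i.
    by rewrite mulr_suml -sumrB; apply: eq_bigr => i _; rewrite mulrBr.
  ring.
have h1 : `|(L - S) * c| <= e / 2.
  rewrite normrM; apply: le_trans (_ : e2 * `|c| <= e / 2).
    by apply: ler_wpM2r.
  have : e2 * (2 * (`|c| + 1)) = e by rewrite mulfVK ?gt_eqF ?mulr_gt0.
  have : 0 <= e2 by rewrite divr_ge0 ?mulr_ge0 ?ltW.
  lra.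
have h2 : `|\sum_i p n i * (c - q n i)| <= e / 2.
  apply: le_trans (ler_norm_sum _ _ _) _.
  apply: le_trans (_ : \sum_i p n i * e1 <= e / 2).
    apply: ler_sum => i _; rewrite normrM ger0_norm // distrC.
    exact: ler_wpM2l.
  rewrite -mulr_suml -/S.
  have : e1 * (2 * (`|L| + 1)) = e by rewrite mulfVK ?gt_eqF ?mulr_gt0.
  have : S <= `|L| + 1 by have := ler_norm L; lra.
  nra.
by apply: le_trans (ler_normD _ _) _; lra.
Unshelve. all: end_near. Qed.

Lemma cvg_mean_ratio p e (tau L : R) : 0 < tau ->
  nat_to_infty (fun n => #|I n|) ->
  (forall n i, 0 <= p n i <= e n i) ->
  uniformly_to (fun n i => #|I n|%:R * e n i) tau ->
  (fun n => \prod_i (1 - p n i)) @ \oo --> expR (- L) ->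
  (fun n => (#|I n|%:R)^-1 * \sum_i p n i / e n i) @ \oo --> L / tau.
Proof.
move=> tau0 I_infty pe e_tau prod_cvg.
have p0 n i : 0 <= p n i by have /andP[] := pe n i.
have e_le : \forall n \near \oo, forall i, #|I n|%:R * e n i <= 2 * tau.
  by apply: filterS (e_tau _ tau0) => n + i => /(_ i) /ler_normlP[_]; lra.
have p_to0 : uniformly_to p 0.
  move=> d d0; have := truncnS_gt (2 * tau / d).
  set M := (Num.truncn _).+1 => M_gt; near=> n => i.
  have I_ge : M%:R <= #|I n|%:R :> R by rewrite ler_nat; near: n; exact: I_infty.
  have I_gt0 : 0 < #|I n|%:R :> R by apply: lt_le_trans I_ge; rewrite ltr0n.
  have := pe n i; rewrite subr0 ger0_norm // => /andP[_ /le_trans]; apply.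
  rewrite -(ler_pM2l I_gt0); apply: le_trans (_ : 2 * tau <= _).
    by move: i; near: n.
  rewrite ltr_pdivrMr // in M_gt.
  by have := ler_wpM2r (ltW d0) I_ge; lra.
have sum_le : \forall n \near \oo, \sum_i p n i <= 2 * tau.
  near=> n; have I_gt0 : 0 < #|I n|%:R :> R by rewrite ltr0n; near: n; exact: I_infty.
  have e_le_n : forall i, #|I n|%:R * e n i <= 2 * tau by near: n.
  rewrite -(ler_pM2l I_gt0) mulr_sumr; apply: le_trans (_ : \sum_(i : I n) 2 * tau <= _).
    apply: ler_sum => i _; have /andP[_ pe_i] := pe n i.
    exact: le_trans (ler_wpM2l (ltW I_gt0) pe_i) (e_le_n i).
  by rewrite sumr_const_card.
have sum_cvg := cvg_sum_of_prod1B _ _ _ (mulr_gt0 (ltr0Sn _ 1) tau0) p0 p_to0 sum_le prod_cvg.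
rewrite (_ : (fun n => _) = fun n => \sum_i p n i * (#|I n|%:R * e n i)^-1).
  exact: cvg_sum_mulr_uniformly _ _ _ _ p0 sum_cvg (uniformly_toV _ _ (lt0r_neq0 tau0) e_tau).
apply/funext => n; rewrite mulr_sumr; apply: eq_bigr => i _.
by rewrite invfM mulrCA.
Unshelve. all: end_near. Qed.

End uniform_convergence.

Lemma fine_probability_setC {d : measure_display} {T : measurableType d}
    {R : realType} (P : probability T R) (E : set T) :
  measurable E -> fine (P (~` E)) = 1 - fine (P E).
Proof.
move=> mE; rewrite probability_setC // -[P E]fineK ?fin_num_measure //.
Qed.

Section exceedances.
Context {d : measure_display} {T : measurableType d} {R : realType}.
Variables (P : probability T R) (Z : R * R -> T -> R) (U : set (R * R)).
Hypothesis mZ : forall x, U x -> measurable_fun setT (Z x).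

(* [Nexc Z C r] is [exceedances (enum_fset C) r]; sequences allow induction. *)
Definition exceedances (s : seq (R * R)) (r : R) : T -> R :=
  fun w => \sum_(x <- s) \1_[set w' | r < Z x w'] w.

Lemma measurable_Zgt x r : U x -> measurable [set w | r < Z x w].
Proof.
move=> Ux; have := mZ x Ux measurableT _ (measurable_itv `]r, +oo[).
by rewrite setTI preimage_itvoy.
Qed.

Lemma measurable_Zle x r : U x -> measurable [set w | Z x w <= r].
Proof.
move=> Ux; have := mZ x Ux measurableT _ (measurable_itv `]-oo, r]).
by rewrite setTI preimage_itvNyc.
Qed.

Lemma exceedances_ge0 s r w : 0 <= exceedances s r w.
Proof. by apply: sumr_ge0 => x _; rewrite indicE ler0n. Qed.

Lemma exceedances_gt0_nil r : [set w | 0 < exceedances [::] r w] = set0.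
Proof. by apply/seteqP; split => w //=; rewrite /exceedances big_nil ltxx. Qed.

Lemma exceedances_gt0_cons x s r : [set w | 0 < exceedances (x :: s) r w] =
  [set w | r < Z x w] `|` [set w | 0 < exceedances s r w].
Proof.
apply/seteqP; split => w /=; rewrite /exceedances big_cons indicE.
- by case: (boolP (w \in _)) => [/set_mem|_]; [left | rewrite add0r; right].
- case=> [Zx|N_gt0]; last by apply: (lt_le_trans N_gt0); rewrite lerDr ler0n.
  by rewrite mem_set // ltr_pwDl ?ltr01 ?exceedances_ge0.
Qed.

Lemma measurable_exceedances_gt0 s r : (forall x, x \in s -> U x) ->
  measurable [set w | 0 < exceedances s r w].
Proof.
elim: s => [|x s IH] sU; first by rewrite exceedances_gt0_nil.
rewrite exceedances_gt0_cons; apply: measurableU.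
  by apply: measurable_Zgt; apply: sU; rewrite mem_head.
by apply: IH => y ys; apply: sU; rewrite in_cons ys orbT.
Qed.

Lemma prob_exceedances_gt0_le s r : (forall x, x \in s -> U x) ->
  (P [set w | (0 < exceedances s r w)%R] <= \sum_(x <- s) P [set w | (r < Z x w)%R])%E.
Proof.
elim: s => [|x s IH] sU; first by rewrite exceedances_gt0_nil big_nil measure0.
have sU' : (forall x, x \in s -> U x) by move=> y ys; apply: sU; rewrite in_cons ys orbT.
have Ux : U x by apply: sU; rewrite mem_head.
rewrite exceedances_gt0_cons big_cons.
apply: le_trans (measureU2 _ (measurable_Zgt x r Ux) (measurable_exceedances_gt0 s r sU')) _.
by apply: leeD => //; exact: IH.
Qed.

Lemma expectation_exceedances s r : (forall x, x \in s -> U x) ->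
  ('E_P[exceedances s r] = \sum_(x <- s) P [set w | (r < Z x w)%R])%E.
Proof.
move=> sU; rewrite unlock /exceedances.
pose g x w : \bar R := if `[< U x >] then (\1_[set w' | r < Z x w'] w)%:E else 0%E.
have g_sum w : ((\sum_(x <- s) \1_[set w' | r < Z x w'] w)%:E = \sum_(x <- s) g x w)%E.
  by rewrite -sumEFin; apply: eq_big_seq => x xs; rewrite /g asboolT //; apply: sU.
under eq_integral do rewrite g_sum.
rewrite ge0_integral_sum //.
- apply: eq_big_seq => x xs; have Ux := sU x xs.
  by rewrite /g asboolT // integral_indic ?setIT //; apply: measurable_Zgt.
- move=> x; rewrite /g; case: (asboolP (U x)) => Ux; last exact: measurable_cst.
  apply/measurable_realfun.measurable_EFinP; apply: measurable_realfun.measurable_indic.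
  exact: measurable_Zgt.
- by move=> x w _; rewrite /g; case: asboolP => _ //; rewrite lee_fin indicE ler0n.
Qed.

Lemma bigmaxe_le_exceedances s r :
  [set w | (\big[maxe/-oo%E]_(x <- s) (Z x w)%:E <= r%:E)%E] =
  ~` [set w | 0 < exceedances s r w].
Proof.
elim: s => [|x s IH].
  by rewrite exceedances_gt0_nil setC0; apply/seteqP; split => w //= _; rewrite big_nil leNye.
rewrite exceedances_gt0_cons setCU -IH; apply/seteqP; split => w /=.
- by rewrite big_cons ge_max lee_fin => /andP[Zx ->]; rewrite ltNge Zx.
- by rewrite big_cons ge_max lee_fin => -[/negP]; rewrite -leNgt => -> ->.
Qed.


Lemma prob_maxle (C : {fset (R * R)}) r : (forall x, x \in C -> U x) ->
  fine (P (maxle Z C r)) = 1 - fine (P [set w | 0 < Nexc Z C r w]).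
Proof.
move=> CU; rewrite /maxle /maxZ bigmaxe_le_exceedances fine_probability_setC //.
exact: measurable_exceedances_gt0.
Qed.

End exceedances.

Lemma inv_condE_Nexc {d : measure_display} {T : measurableType d} {R : realType}
    (P : probability T R) (Z : R * R -> T -> R) (C : {fset (R * R)}) r :
  (condE P (Nexc Z C r) [set w | 0 < Nexc Z C r w])^-1 =
  fine (P [set w | 0 < Nexc Z C r w]) / fine ('E_P[Nexc Z C r]).
Proof.
rewrite /condE invf_div; congr (fine (P _) / fine 'E_P[_]).
apply/funext => w /=; rewrite indicE.
have [N_gt0|] := boolP (0 < Nexc Z C r w); first by rewrite mem_set ?mulr1.
rewrite -leNgt => N_le0; have -> : Nexc Z C r w = 0.
  by apply/le_anti; rewrite N_le0 (exceedances_ge0 Z).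
by rewrite mul0r.
Qed.

Section identically_distributed.
Context {d : measure_display} {T : measurableType d} {R : realType}.
Variables (P : probability T R) (Z : R * R -> T -> R) (U : set (R * R)) (F : R -> R).
Hypothesis mZ : forall x, U x -> measurable_fun setT (Z x).
Hypothesis ZF : forall x, U x -> forall r, fine (P [set w | Z x w <= r]) = F r.

Lemma prob_Zgt x r : U x -> P [set w | r < Z x w] = (1 - F r)%:E.
Proof.
move=> Ux; have mZle := measurable_Zle _ _ mZ _ r Ux.
have -> : [set w | r < Z x w] = ~` [set w | Z x w <= r].
  by apply/seteqP; split => w /=; rewrite ltNge => /negP.
by rewrite -[LHS]fineK ?fin_num_measure ?fine_probability_setC ?ZF //; exact: measurableC.
Qed.

Lemma sum_prob_Zgt (C : {fset (R * R)}) r : (forall x, x \in C -> U x) ->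
  (\sum_(x <- C) P [set w | (r < Z x w)%R] = (#|` C|%:R * (1 - F r))%:E)%E.
Proof.
move=> CU; rewrite (eq_big_seq (fun _ => (1 - F r)%:E)) => [|x xC].
  by rewrite sumEFin big_const_seq count_predT iter_addr_0 mulr_natl.
by rewrite prob_Zgt //; apply: CU.
Qed.

Lemma expectation_Nexc (C : {fset (R * R)}) r : (forall x, x \in C -> U x) ->
  ('E_P[Nexc Z C r] = (#|` C|%:R * (1 - F r))%:E)%E.
Proof. by move=> CU; rewrite (expectation_exceedances P _ _ mZ) // sum_prob_Zgt. Qed.

Lemma prob_Nexc_gt0_bounds (C : {fset (R * R)}) r : (forall x, x \in C -> U x) ->
  0 <= fine (P [set w | 0 < Nexc Z C r w]) <= fine 'E_P[Nexc Z C r].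
Proof.
move=> CU; rewrite fine_ge0 ?measure_ge0 //= expectation_Nexc //=.
have := prob_exceedances_gt0_le P _ _ mZ _ r CU; rewrite sum_prob_Zgt //.
by apply: fine_le; rewrite ?fin_num_measure //; exact: (measurable_exceedances_gt0 _ _ mZ).
Qed.

End identically_distributed.

Section blocks.
Context {d : measure_display} {T : measurableType d} {R : realType}.
Context {P : probability T R} {A : nat -> {fset (R * R)}} {Z : R * R -> T -> R}.
Context {F : R -> R} {u : nat -> R} {k : nat -> nat}.
Context {B : nat -> nat -> nat -> {fset (R * R)}}.
Hypothesis mZ : forall x, (exists n, x \in A n) -> measurable_fun setT (Z x).
Hypothesis ZF : forall x, (exists n, x \in A n) -> forall r : R,
  fine (P [set w | Z x w <= r]) = F r.
Hypothesis B_sub : forall n s t, (s < k n)%N -> (t < k n)%N -> (B n s t `<=` A n)%fset.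

Let I n : finType := ('I_(k n) * 'I_(k n))%type.

Definition block_condE n (x : I n) : R :=
  condE P (Nexc Z (B n x.1 x.2) (u n)) [set w | 0 < Nexc Z (B n x.1 x.2) (u n) w].

Definition block_exceed_prob n (x : I n) : R :=
  fine (P [set w | 0 < Nexc Z (B n x.1 x.2) (u n) w]).

Definition block_exceed_mean n (x : I n) : R :=
  fine 'E_P[Nexc Z (B n x.1 x.2) (u n)].

Lemma inv_block_condE n x :
  (block_condE n x)^-1 = block_exceed_prob n x / block_exceed_mean n x.
Proof. exact: inv_condE_Nexc. Qed.

Lemma mean_inv_block_condE n :
  ((k n) ^ 2)%:R^-1 * \sum_(s < k n) \sum_(t < k n)
     (condE P (Nexc Z (B n s t) (u n)) [set w | 0 < Nexc Z (B n s t) (u n) w])^-1 =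
  (#|I n|%:R)^-1 * \sum_x block_exceed_prob n x / block_exceed_mean n x.
Proof.
rewrite card_prod card_ord mulnn pair_bigA; congr (_ * _).
by apply: eq_bigr => x _; rewrite inv_block_condE.
Qed.

Lemma block_points n (x : I n) y :
  y \in B n x.1 x.2 -> exists m, y \in A m.
Proof. by move=> yB; exists n; apply: fsubsetP yB; apply: B_sub. Qed.

Lemma block_exceed_prob_bounds n x :
  0 <= block_exceed_prob n x <= block_exceed_mean n x.
Proof. exact: (prob_Nexc_gt0_bounds _ _ _ _ mZ ZF _ _ (@block_points n x)). Qed.

Lemma uniformly_block_exceed_mean (tau : R) :
  (fun n => fine 'E_P[Nexc Z (A n) (u n)]) @ \oo --> tau ->
  (forall e : R, 0 < e -> \forall n \near \oo, forall s t,
     (s < k n)%N -> (t < k n)%N ->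
     `| (#|` B n s t|)%:R * ((k n) ^ 2)%:R / (#|` A n|)%:R - 1 | <= e) ->
  uniformly_to (fun n x => #|I n|%:R * block_exceed_mean n x) tau.
Proof.
move=> EA_tau B_card.
have B_unif : uniformly_to (R := R) (I := I) (fun n (x : I n) =>
    (#|` B n x.1 x.2|)%:R * ((k n) ^ 2)%:R / (#|` A n|)%:R) 1.
  move=> e e0; apply: filterS (B_card e e0) => n B_n x.
  exact: B_n _ _ (ltn_ord x.1) (ltn_ord x.2).
have A_points n y : y \in A n -> exists m, y \in A m by exists n.
have mean_eq n x : #|I n|%:R * block_exceed_mean n x =
    (#|` B n x.1 x.2|)%:R * ((k n) ^ 2)%:R / (#|` A n|)%:R
    * fine 'E_P[Nexc Z (A n) (u n)].
  rewrite /block_exceed_mean (expectation_Nexc _ _ _ _ mZ ZF _ _ (@block_points n x)).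
  rewrite (expectation_Nexc _ _ _ _ mZ ZF _ _ (A_points n)) /= card_prod card_ord mulnn.
  (* if #|A_n| = 0 then both sides vanish, because B_n^(s,t) is a subset of A_n *)
  have [A0|A0] := eqVneq #|` A n| 0%N; last by field; rewrite pnatr_eq0.
  suff -> : #|` B n x.1 x.2| = 0%N by rewrite A0 !mul0r mulr0.
  by apply/eqP; rewrite -leqn0 -A0 fsubset_leq_card ?B_sub.
have := uniformly_toMr _ _ _ _ B_unif EA_tau; rewrite mul1r => unif e e0.
by apply: filterS (unif e e0) => n unif_n x; rewrite mean_eq.
Qed.

Lemma cvg_prod_block_exceed_prob (theta tau : R) :
  spatial_extremal_index P Z A theta -> 0 < tau ->
  (fun n => fine 'E_P[Nexc Z (A n) (u n)]) @ \oo --> tau ->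
  (fun n => fine (P (maxle Z (A n) (u n)))
     - \prod_(s < k n) \prod_(t < k n) fine (P (maxle Z (B n s t) (u n))))
    @ \oo --> (0 : R) ->
  (fun n => \prod_x (1 - block_exceed_prob n x)) @ \oo --> expR (- (theta * tau)).
Proof.
move=> sei tau0 EA_tau maxA_prod.
have -> : (fun n => \prod_x (1 - block_exceed_prob n x)) =
    (fun n => fine (P (maxle Z (A n) (u n)))) - (fun n => fine (P (maxle Z (A n) (u n)))
     - \prod_(s < k n) \prod_(t < k n) fine (P (maxle Z (B n s t) (u n)))).
  apply/funext => n /=; rewrite opprB addrC subrK pair_bigA.
  by apply: eq_bigr => x _; rewrite (prob_maxle _ _ _ mZ) //; exact: block_points.
by rewrite -[expR _]subr0; apply: cvgB => //; exact: sei.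
Qed.

Lemma uniformly_block_ratio :
  (forall e : R, 0 < e -> \forall n \near \oo, forall s t,
      (s < k n)%N -> (t < k n)%N ->
      `| condE P (Nexc Z (B n s t) (u n))
               [set w | 0 < Nexc Z (B n s t) (u n) w] - 1 | <= e) ->
  uniformly_to (fun n x => block_exceed_prob n x / block_exceed_mean n x) 1.
Proof.
move=> condE_to1; have : uniformly_to (R := R) (I := I) block_condE 1.
  move=> e e0; apply: filterS (condE_to1 e e0) => n condE_n x.
  exact: condE_n _ _ (ltn_ord x.1) (ltn_ord x.2).
move/(uniformly_toV _ _ (oner_neq0 _)); rewrite invr1 => inv_to1 e e0.
by apply: filterS (inv_to1 e e0) => n inv_n x; rewrite -inv_block_condE.
Qed.

End blocks.

Theorem proposition2p3 (d : measure_display) (T : measurableType d)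
  (R : realType) (P : probability T R)
  (A : nat -> {fset (R * R)}) (Z : R * R -> T -> R) (F : R -> R)
  (tau : R) (u : nat -> R) (k l : nat -> nat)
  (B : nat -> nat -> nat -> {fset (R * R)}) (theta : R) :
  (* A_n increasing, f(n) = #A_n -> +oo *)
  (forall n, (A n `<=` A n.+1)%fset) ->
  nat_to_infty (fun n => #|` A n|) ->
  (* S = \bigcup_n A_n consists of isolated points of R^2 *)
  (forall x, (exists n, x \in A n) ->
     exists2 e : R, 0 < e & forall y, (exists n, y \in A n) ->
       `|y.1 - x.1| < e -> `|y.2 - x.2| < e -> y = x) ->
  (* {Z(x) : x in S} is a random field, all Z(x) with distribution function F *)
  (forall x, (exists n, x \in A n) -> measurable_fun setT (Z x)) ->
  (forall x, (exists n, x \in A n) -> forall r : R,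
     fine (P [set w | Z x w <= r]) = F r) ->
  (* tau > 0 and E(sum_{x in A_n} 1_{Z(x) > u_n}) -> tau *)
  0 < tau ->
  (fun n => fine ('E_P[Nexc Z (A n) (u n)])) @ \oo --> tau ->
  (* condition D(u_n(tau), k_n, l_n) *)
  condD P Z A u k l ->
  (* the blocks B_n^(s,t), s, t = 1..k_n (indexed here by 0..k_n - 1) *)
  (forall n s t, (s < k n)%N -> (t < k n)%N -> (B n s t `<=` A n)%fset) ->
  (forall n s t s' t', (s < k n)%N -> (t < k n)%N -> (s' < k n)%N ->
     (t' < k n)%N -> (s, t) != (s', t') ->
     (B n s t `&` B n s' t')%fset = fset0) ->
  (forall e : R, 0 < e -> \forall n \near \oo, forall s t,
     (s < k n)%N -> (t < k n)%N ->
     `| (#|` B n s t|)%:R * ((k n) ^ 2)%:R / (#|` A n|)%:R - 1 | <= e) ->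
  (fun n => fine (P (maxle Z (A n) (u n)))
     - \prod_(s < k n) \prod_(t < k n) fine (P (maxle Z (B n s t) (u n))))
    @ \oo --> (0 : R) ->
  spatial_extremal_index P Z A theta ->
  (fun n => ((k n) ^ 2)%:R^-1 *
     \sum_(s < k n) \sum_(t < k n)
        (condE P (Nexc Z (B n s t) (u n))
               [set w | 0 < Nexc Z (B n s t) (u n) w])^-1) @ \oo --> theta
  /\
  ((forall e : R, 0 < e -> \forall n \near \oo, forall s t,
      (s < k n)%N -> (t < k n)%N ->
      `| condE P (Nexc Z (B n s t) (u n))
               [set w | 0 < Nexc Z (B n s t) (u n) w] - 1 | <= e) ->
   theta = 1).
Proof.
(* Condition D, the disjointness of the blocks and the isolation of the points
   only serve to derive the block approximation of P(max_{A_n} Z <= u_n),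
   which is assumed here. *)
move=> _ _ _ mZ ZF tau_gt0 EA_tau [[_ k_gt0] [_ k_infty] _ _ _] B_sub _ B_card
  maxA_prod sei.
have pairs_infty : nat_to_infty (fun n => #|{: 'I_(k n) * 'I_(k n)}|).
  move=> M; apply: filterS (k_infty M) => n kM.
  by rewrite card_prod card_ord (leq_trans kM) ?leq_pmulr ?k_gt0.
have := cvg_mean_ratio _ _ _ _ tau_gt0 pairs_infty (block_exceed_prob_bounds mZ ZF B_sub)
  (uniformly_block_exceed_mean mZ ZF B_sub _ EA_tau B_card)
  (cvg_prod_block_exceed_prob mZ B_sub _ _ sei tau_gt0 EA_tau maxA_prod).
rewrite mulfK ?lt0r_neq0 // => mean_to_theta.
rewrite (funext mean_inv_block_condE); split => // condE_to1.
have := cvg_mean_uniformly _ _ (pairs_infty 1%N) (uniformly_block_ratio condE_to1).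
exact: cvg_unique mean_to_theta.
Qed.
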